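(* Let $P,Q\in\mathbb P_d$ and let $R=\big[\gamma^{\mathrm{BW}}_{P^{-1}Q^{-1}}(t)\big]^{-1}$ for some $t\in[0,1]$. Then $\operatorname{F}_R(P,Q)=\operatorname{F}^{\mathrm U}(P,Q)$.
   Context: $\mathbb P_d$ is the set of $d\times d$ complex positive definite matrices; $A\#B:=A^{1/2}(A^{-1/2}BA^{-1/2})^{1/2}A^{1/2}$. The Bures–Wasserstein geodesic between $A,B\in\mathbb P_d$ is $\gamma^{\mathrm{BW}}_{AB}(t):=[(1-t)\mathbb I+t\,A^{-1}\#B]\,A\,[(1-t)\mathbb I+t\,A^{-1}\#B]$, $t\in[0,1]$. The generalized fidelity is $\operatorname{F}_R(P,Q):=\operatorname{Tr}\big[\sqrt{R^{1/2}PR^{1/2}}\,R^{-1}\sqrt{R^{1/2}QR^{1/2}}\big]$ and the Uhlmann fidelity is $\operatorname{F}^{\mathrm U}(P,Q):=\operatorname{Tr}\sqrt{P^{1/2}QP^{1/2}}$. *)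

(* Complex scalars: an arbitrary numClosedFieldType C
   (e.g. algC, or R[i] for a real closed / real field R); conjugation conjC. *)
From HB Require Import structures.
From mathcomp Require Import all_boot all_order all_algebra.
From Stdlib Require Import ClassicalEpsilon.
Set Implicit Arguments. Unset Strict Implicit. Unset Printing Implicit Defensive.
Import Order.TTheory GRing.Theory Num.Theory.
Local Open Scope ring_scope.

Section Defs.
Variable C : numClosedFieldType.

Definition adjmx m n (A : 'M[C]_(m, n)) : 'M[C]_(n, m) := map_mx Num.conj (A^T).

Definition psdmx d (A : 'M[C]_d) : Prop :=
  adjmx A = A /\ forall v : 'cV[C]_d, 0 <= (adjmx v *m A *m v) 0 0.

Definition posdefmx d (A : 'M[C]_d) : Prop :=
  adjmx A = A /\ forall v : 'cV[C]_d, v != 0 -> 0 < (adjmx v *m A *m v) 0 0.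

(* principal square root: the (unique) PSD S with S S = A, chosen by
   classical choice (for A PSD it exists and is unique). *)
Definition sqrtmx d (A : 'M[C]_d) : 'M[C]_d :=
  epsilon (inhabits 0) (fun S : 'M[C]_d => psdmx S /\ S *m S = A).

Definition gmeanmx d (A B : 'M[C]_d) : 'M[C]_d :=
  let sA := sqrtmx A in let isA := invmx sA in
  sA *m sqrtmx (isA *m B *m isA) *m sA.

Definition bw_geodesic d (A B : 'M[C]_d) (t : C) : 'M[C]_d :=
  let M := (1 - t) *: (1%:M : 'M[C]_d) + t *: gmeanmx (invmx A) B in
  M *m A *m M.

Definition gen_fidelity d (R P Q : 'M[C]_d) : C :=
  let sR := sqrtmx R in
  \tr (sqrtmx (sR *m P *m sR) *m invmx R *m sqrtmx (sR *m Q *m sR)).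

Definition uhlmann_fidelity d (P Q : 'M[C]_d) : C :=
  \tr (sqrtmx (sqrtmx P *m Q *m sqrtmx P)).

End Defs.

From HB Require Import structures.
From mathcomp Require Import all_boot all_order all_algebra.
From Stdlib Require Import ClassicalEpsilon.
Import Order.TTheory GRing.Theory Num.Theory.
Local Open Scope ring_scope.
Set Implicit Arguments. Unset Strict Implicit. Unset Printing Implicit Defensive.

(** The matrix G = P # Q^-1 solves the Riccati equation G P^-1 G = Q^-1.
    Hence, with the commuting positive matrices M = (1-t) I + t G and
    L = G^-1 M, the point of the geodesic is M P^-1 M = L Q^-1 L, so that
    R = (M P^-1 M)^-1 satisfies P = M R M and Q = L R L.  For such
    congruences the square roots in F_R are explicit,
    sqrt(R^1/2 (M R M) R^1/2) = R^1/2 M R^1/2, and F_R(P, Q) collapses to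
    tr(M L R) = tr(G Q) = tr((P # Q^-1) Q), which is the Uhlmann fidelity. *)

Section PositiveMatrices.
Variable C : numClosedFieldType.

Local Notation sqnorm v := ((adjmx v *m v) 0 0).
Local Notation qform A v := ((adjmx v *m A *m v) 0 0).

Lemma invmxM n (A B : 'M[C]_n) :
  A \in unitmx -> B \in unitmx -> invmx (A *m B) = invmx B *m invmx A.
Proof.
move=> uA uB; have uAB : A *m B \in unitmx by rewrite unitmx_mul uA.
have E : A *m B *m (invmx B *m invmx A) = 1%:M by rewrite mulmxA mulmxK // mulmxV.
by rewrite -[LHS]mulmx1 -E mulmxA mulVmx // mul1mx.
Qed.

Lemma adjmxM m n p (A : 'M[C]_(m, n)) (B : 'M[C]_(n, p)) :
  adjmx (A *m B) = adjmx B *m adjmx A.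
Proof. by rewrite /adjmx trmx_mul map_mxM. Qed.

Lemma adjmxK m n (A : 'M[C]_(m, n)) : adjmx (adjmx A) = A.
Proof. by apply/matrixP=> i j; rewrite !mxE conjCK. Qed.

Lemma adjmxD m n (A B : 'M[C]_(m, n)) : adjmx (A + B) = adjmx A + adjmx B.
Proof. by apply/matrixP=> i j; rewrite !mxE rmorphD. Qed.

Lemma adjmxB m n (A B : 'M[C]_(m, n)) : adjmx (A - B) = adjmx A - adjmx B.
Proof. by apply/matrixP=> i j; rewrite !mxE rmorphB. Qed.

Lemma adjmxZ m n a (A : 'M[C]_(m, n)) : adjmx (a *: A) = a^* *: adjmx A.
Proof. by apply/matrixP=> i j; rewrite !mxE rmorphM. Qed.

Lemma adjmx1 n : adjmx (1%:M : 'M[C]_n) = 1%:M.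
Proof. by rewrite /adjmx trmx1 map_mx1. Qed.

Lemma adjmxV n (A : 'M[C]_n) : adjmx (invmx A) = invmx (adjmx A).
Proof. by rewrite /adjmx trmx_inv map_invmx. Qed.

Lemma adjmx_diag n (y : 'rV[C]_n) : adjmx (diag_mx y) = diag_mx (map_mx Num.conj y).
Proof. by rewrite /adjmx tr_diag_mx map_diag_mx. Qed.

Lemma unitary_mul_adjmx n (U : 'M[C]_n) : U \is unitarymx -> U *m adjmx U = 1%:M.
Proof. exact: unitarymxP. Qed.

Lemma qform_diag n (y : 'rV[C]_n) (v : 'cV[C]_n) :
  qform (diag_mx y) v = \sum_j y 0 j * `|v j 0| ^+ 2.
Proof.
rewrite mul_mx_diag !mxE; apply: eq_bigr => j _.
by rewrite !mxE normCK -mulrA mulrCA [v j 0 * _]mulrC.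
Qed.

Lemma sqnormE n (v : 'cV[C]_n) : sqnorm v = \sum_j `|v j 0| ^+ 2.
Proof.
rewrite -[adjmx v]mulmx1 -diag_const_mx qform_diag.
by apply: eq_bigr => j _; rewrite mxE mul1r.
Qed.

Lemma sqnorm_ge0 n (v : 'cV[C]_n) : 0 <= sqnorm v.
Proof. by rewrite sqnormE sumr_ge0 // => j _; rewrite exprn_ge0. Qed.

Lemma sqnorm_eq0 n (v : 'cV[C]_n) : sqnorm v = 0 -> v = 0.
Proof.
rewrite sqnormE => /eqP; rewrite psumr_eq0 => [/allP v0|j _]; last by rewrite exprn_ge0.
apply/matrixP=> i j; rewrite ord1 mxE.
by have /= := v0 i (mem_index_enum i); rewrite sqrf_eq0 normr_eq0 => /eqP.
Qed.

Lemma sqnorm_gt0 n (v : 'cV[C]_n) : v != 0 -> 0 < sqnorm v.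
Proof.
move=> v_neq0; rewrite lt_def sqnorm_ge0 andbT.
by apply: contra v_neq0 => /eqP/sqnorm_eq0 ->.
Qed.

Lemma qform_eigen n (A : 'M[C]_n) (v : 'cV[C]_n) x :
  A *m v = x *: v -> qform A v = x * sqnorm v.
Proof. by move=> Av; rewrite -mulmxA Av -scalemxAr mxE. Qed.

Lemma qformD n (A B : 'M[C]_n) (v : 'cV[C]_n) :
  qform (A + B) v = qform A v + qform B v.
Proof. by rewrite mulmxDr mulmxDl mxE. Qed.

Lemma psdmx_congr m n (A : 'M[C]_m) (X : 'M[C]_(m, n)) :
  psdmx A -> psdmx (adjmx X *m A *m X).
Proof.
move=> [hA pA]; split; first by rewrite !adjmxM adjmxK hA mulmxA.
by move=> v; rewrite !mulmxA -adjmxM -!mulmxA mulmxA; apply: pA.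
Qed.

Lemma psdmx_adjmx_mul m n (X : 'M[C]_(m, n)) : psdmx (adjmx X *m X).
Proof.
split=> [|v]; first by rewrite adjmxM adjmxK.
by rewrite mulmxA -adjmxM -mulmxA sqnorm_ge0.
Qed.

Lemma psdmx_diag n (y : 'rV[C]_n) : (forall i, 0 <= y 0 i) -> psdmx (diag_mx y).
Proof.
move=> y_ge0; split=> [|v].
  by rewrite adjmx_diag; congr diag_mx; apply/matrixP=> i j; rewrite ord1 mxE geC0_conj.
by rewrite qform_diag sumr_ge0 // => j _; rewrite mulr_ge0 ?exprn_ge0.
Qed.

Lemma posdefmx_psd n (A : 'M[C]_n) : posdefmx A -> psdmx A.
Proof.
move=> [hA pA]; split=> // v; have [->|v_neq0] := eqVneq v 0.
  by rewrite mulmx0 mxE.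
exact: ltW (pA v v_neq0).
Qed.

Lemma posdefmx_congr n (A X : 'M[C]_n) :
  posdefmx A -> X \in unitmx -> posdefmx (adjmx X *m A *m X).
Proof.
move=> pdA uX; have [hA _] := psdmx_congr X (posdefmx_psd pdA).
split=> // v v_neq0; rewrite !mulmxA -adjmxM -!mulmxA mulmxA.
apply: pdA.2; apply: contra v_neq0 => /eqP Xv.
by rewrite -(mulKmx uX v) Xv mulmx0.
Qed.

Lemma posdefmx_unit n (A : 'M[C]_n) : posdefmx A -> A \in unitmx.
Proof.
move=> [_ pA]; apply: contraT => A_nonunit.
have : kermx A^T != 0 by rewrite kermx_eq0 row_free_unit unitmx_tr.
case/rowV0Pn => u /sub_kermxP uA u_neq0.
have /pA : u^T != 0 by rewrite trmx_eq0.
have Au : A *m u^T = 0 by rewrite -[A]trmxK -trmx_mul uA trmx0.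
by rewrite -mulmxA Au mulmx0 mxE ltxx.
Qed.

Lemma posdefmx_inv n (A : 'M[C]_n) : posdefmx A -> posdefmx (invmx A).
Proof.
move=> pdA; have uA := posdefmx_unit pdA.
have -> : invmx A = adjmx (invmx A) *m A *m invmx A.
  by rewrite adjmxV pdA.1 mulVmx // mul1mx.
by apply: posdefmx_congr; rewrite ?unitmx_inv.
Qed.

Lemma posdefmx_comb n (A : 'M[C]_n) a b :
  posdefmx A -> 0 <= a -> 0 <= b -> (0 < a) || (0 < b) ->
  posdefmx (a *: 1%:M + b *: A).
Proof.
move=> [hA pA] a_ge0 b_ge0 ab_gt0; split.
  by rewrite adjmxD !adjmxZ adjmx1 hA !geC0_conj.
move=> v v_neq0; rewrite mulmxDr mulmxDl -!scalemxAr -!scalemxAl mulmx1.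
rewrite [_ 0 0]mxE [X in X + _]mxE [X in _ + X]mxE.
have v_gt0 := sqnorm_gt0 v_neq0; have A_gt0 := pA v v_neq0.
case/orP: ab_gt0 => [a_gt0|b_gt0].
  exact: ltr_wpDr (mulr_ge0 b_ge0 (ltW A_gt0)) (mulr_gt0 a_gt0 v_gt0).
exact: ltr_wpDl (mulr_ge0 a_ge0 (ltW v_gt0)) (mulr_gt0 b_gt0 A_gt0).
Qed.

Definition spectral_eigvec n (A : 'M[C]_n) (i : 'I_n) : 'cV[C]_n :=
  adjmx (spectralmx A) *m delta_mx i 0.

Lemma hermmx_spectral n (A : 'M[C]_n) : adjmx A = A ->
  A = adjmx (spectralmx A) *m diag_mx (spectral_diag A) *m spectralmx A.
Proof.
move=> hA; have nA : A \is normalmx.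
  by apply/normalmxP; change (A *m adjmx A = adjmx A *m A); rewrite hA.
by have := orthomx_spectralP nA; rewrite invmx_unitary ?spectral_unitarymx.
Qed.

Lemma spectral_eigvec_neq0 n (A : 'M[C]_n) i : spectral_eigvec A i != 0.
Proof.
apply/eqP => /(congr1 (mulmx (spectralmx A))).
rewrite mulmxA unitary_mul_adjmx ?spectral_unitarymx // mul1mx mulmx0.
by move/matrixP/(_ i 0)/eqP; rewrite !mxE !eqxx oner_eq0.
Qed.

Lemma hermmx_spectral_eigvec n (A : 'M[C]_n) i : adjmx A = A ->
  A *m spectral_eigvec A i = spectral_diag A 0 i *: spectral_eigvec A i.
Proof.
move=> /hermmx_spectral {1}->; rewrite /spectral_eigvec -!mulmxA.
rewrite [spectralmx A *m _]mulmxA unitary_mul_adjmx ?spectral_unitarymx // mul1mx.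
rewrite scalemxAr; congr (_ *m _); apply/matrixP=> k l.
by rewrite mul_diag_mx !mxE ord1 eqxx andbT; case: eqP => [->|]; rewrite ?mulr1 ?mulr0.
Qed.

Lemma hermmx_eq0 n (A : 'M[C]_n) : adjmx A = A ->
  (forall i, spectral_diag A 0 i = 0) -> A = 0.
Proof.
move=> hA x0; rewrite {1}(hermmx_spectral hA).
have -> : diag_mx (spectral_diag A) = 0.
  by apply/matrixP=> i j; rewrite !mxE x0 mul0rn.
by rewrite mulmx0 mul0mx.
Qed.

Lemma psdmx_eigenvalue_ge0 n (A : 'M[C]_n) (v : 'cV[C]_n) x :
  psdmx A -> v != 0 -> A *m v = x *: v -> 0 <= x.
Proof.
move=> [_ pA] v_neq0 /qform_eigen Av.
by have := pA v; rewrite Av pmulr_lge0 // sqnorm_gt0.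
Qed.

Lemma hermmx_eigenvalue_real n (A : 'M[C]_n) (v : 'cV[C]_n) x :
  adjmx A = A -> v != 0 -> A *m v = x *: v -> x^* = x.
Proof.
move=> hA v_neq0 Av; apply: (mulIf (lt0r_neq0 (sqnorm_gt0 v_neq0))).
by rewrite -(qform_eigen Av) -{1}hA -adjmxM Av adjmxZ -scalemxAl [RHS]mxE.
Qed.

Lemma psdmx_sqrt_exists n (A : 'M[C]_n) : psdmx A -> exists2 S, psdmx S & S *m S = A.
Proof.
move=> psdA; have hA := psdA.1.
set U := spectralmx A; set x := spectral_diag A.
have uU : U \is unitarymx := spectral_unitarymx A.
have x_ge0 i : 0 <= x 0 i.
  exact: psdmx_eigenvalue_ge0 psdA (spectral_eigvec_neq0 A i) (hermmx_spectral_eigvec i hA).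
pose y := \row_j sqrtC (x 0 j).
exists (adjmx U *m diag_mx y *m U).
  by apply: psdmx_congr; apply: psdmx_diag => i; rewrite mxE sqrtC_ge0.
rewrite [RHS]hermmx_spectral // -/U -/x !mulmxA -[_ *m U *m adjmx U]mulmxA.
rewrite unitary_mul_adjmx // mulmx1 -[_ *m diag_mx y *m diag_mx y]mulmxA mulmx_diag.
by congr (_ *m diag_mx _ *m _); apply/matrixP=> i j; rewrite !mxE -expr2 sqrtCK ord1.
Qed.

Lemma psdmx_qform_eq0 n (S : 'M[C]_n) (v : 'cV[C]_n) :
  psdmx S -> qform S v = 0 -> S *m v = 0.
Proof.
move=> /psdmx_sqrt_exists[B [hB _] <-].
rewrite -{1}hB !mulmxA -adjmxM -mulmxA => /sqnorm_eq0 Bv.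
by rewrite -mulmxA Bv mulmx0.
Qed.

Lemma psdmx_unit_posdef n (A : 'M[C]_n) : psdmx A -> A \in unitmx -> posdefmx A.
Proof.
move=> psdA uA; split=> [|v v_neq0]; first exact: psdA.1.
rewrite lt_def psdA.2 andbT; apply: contra v_neq0 => /eqP/(psdmx_qform_eq0 psdA) Av.
by rewrite -(mulKmx uA v) Av mulmx0.
Qed.

Lemma psdmx_sqrt_unique n (S T : 'M[C]_n) :
  psdmx S -> psdmx T -> S *m S = T *m T -> S = T.
Proof.
move=> psdS psdT ST; apply/eqP; rewrite -subr_eq0; apply/eqP.
set D := S - T; have hD : adjmx D = D by rewrite adjmxB psdS.1 psdT.1.
apply: hermmx_eq0 => // i.
set v := spectral_eigvec D i; set x := spectral_diag D 0 i.
have v_neq0 : v != 0 := spectral_eigvec_neq0 D i.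
have Dv : D *m v = x *: v := hermmx_spectral_eigvec i hD.
have vD : adjmx v *m D = x *: adjmx v.
  by rewrite -{1}hD -adjmxM Dv adjmxZ (hermmx_eigenvalue_real hD v_neq0 Dv).
have SD : qform (S *m D) v = x * qform S v by rewrite -!mulmxA Dv -!scalemxAr mxE.
have DT : qform (D *m T) v = x * qform T v by rewrite !mulmxA vD -!scalemxAl mxE.
(* S D + D T = S^2 - T^2 = 0, evaluated on the eigenvector v of D. *)
have : x * (qform S v + qform T v) = 0.
  have SDT : S *m D + D *m T = 0 by rewrite mulmxBr mulmxBl addrA subrK ST subrr.
  by rewrite mulrDr -SD -DT -qformD SDT mulmx0 mul0mx mxE.
move=> /eqP; rewrite mulf_eq0 => /orP[/eqP //|].
rewrite paddr_eq0 ?psdS.2 ?psdT.2 // => /andP[/eqP S0 /eqP T0].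
have : D *m v = 0 by rewrite mulmxBl (psdmx_qform_eq0 psdS S0) (psdmx_qform_eq0 psdT T0) subrr.
by rewrite Dv => /eqP; rewrite scaler_eq0 (negPf v_neq0) orbF => /eqP.
Qed.

Lemma sqrtmxP n (A : 'M[C]_n) : psdmx A -> psdmx (sqrtmx A) /\ sqrtmx A *m sqrtmx A = A.
Proof.
move=> /psdmx_sqrt_exists[S psdS SS].
by apply: (epsilon_spec _ (fun S => psdmx S /\ S *m S = A)); exists S.
Qed.

Lemma sqrtmx_psd n (A : 'M[C]_n) : psdmx A -> psdmx (sqrtmx A).
Proof. by case/sqrtmxP. Qed.

Lemma sqrtmxK n (A : 'M[C]_n) : psdmx A -> sqrtmx A *m sqrtmx A = A.
Proof. by case/sqrtmxP. Qed.

Lemma sqrtmx_sqr n (S : 'M[C]_n) : psdmx S -> sqrtmx (S *m S) = S.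
Proof.
move=> psdS; have psdSS : psdmx (S *m S) by rewrite -{1}psdS.1; apply: psdmx_adjmx_mul.
exact: psdmx_sqrt_unique (sqrtmx_psd psdSS) psdS (sqrtmxK psdSS).
Qed.

Lemma sqrtmx_posdef n (A : 'M[C]_n) : posdefmx A -> posdefmx (sqrtmx A).
Proof.
move=> pdA; have psdA := posdefmx_psd pdA.
apply: psdmx_unit_posdef (sqrtmx_psd psdA) _.
by move: (posdefmx_unit pdA); rewrite -{1}(sqrtmxK psdA) unitmx_mul => /andP[].
Qed.

Lemma sqrtmx_invmx n (A : 'M[C]_n) : posdefmx A -> sqrtmx (invmx A) = invmx (sqrtmx A).
Proof.
move=> pdA; have pdS := sqrtmx_posdef pdA; have uS := posdefmx_unit pdS.
rewrite -{1}(sqrtmxK (posdefmx_psd pdA)) invmxM // sqrtmx_sqr //.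
exact/posdefmx_psd/posdefmx_inv.
Qed.

Lemma sqrtmx_sandwich n (R M : 'M[C]_n) : psdmx R -> psdmx M ->
  sqrtmx (sqrtmx R *m (M *m R *m M) *m sqrtmx R) = sqrtmx R *m M *m sqrtmx R.
Proof.
move=> psdR psdM; set S := sqrtmx R; have hS : adjmx S = S := (sqrtmx_psd psdR).1.
rewrite -(sqrtmxK psdR) -/S.
have -> : S *m (M *m (S *m S) *m M) *m S = (S *m M *m S) *m (S *m M *m S).
  by rewrite !mulmxA.
by apply: sqrtmx_sqr; rewrite -{1}hS; apply: psdmx_congr.
Qed.

Lemma gmeanmx_posdef n (A B : 'M[C]_n) :
  posdefmx A -> posdefmx B -> posdefmx (gmeanmx A B).
Proof.
move=> pdA pdB; rewrite /gmeanmx; set S := sqrtmx A.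
have pdS : posdefmx S := sqrtmx_posdef pdA; have uS := posdefmx_unit pdS.
have pdX : posdefmx (invmx S *m B *m invmx S).
  by rewrite -{1}(posdefmx_inv pdS).1; apply: posdefmx_congr; rewrite ?unitmx_inv.
by rewrite -{1}pdS.1; apply: posdefmx_congr => //; apply: sqrtmx_posdef.
Qed.

Lemma gmeanmx_riccati n (A B : 'M[C]_n) : posdefmx A -> posdefmx B ->
  gmeanmx A B *m invmx A *m gmeanmx A B = B.
Proof.
move=> pdA pdB; rewrite /gmeanmx; set S := sqrtmx A.
have pdS : posdefmx S := sqrtmx_posdef pdA; have uS := posdefmx_unit pdS.
have psdX : psdmx (invmx S *m B *m invmx S).
  by rewrite -{1}(posdefmx_inv pdS).1; apply/psdmx_congr/posdefmx_psd.
rewrite -(sqrtmxK (posdefmx_psd pdA)) -/S invmxM //.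
rewrite !mulmxA mulmxK // mulmxKV // -(mulmxA S) (sqrtmxK psdX).
by rewrite !mulmxA mulmxKV // mulmxV // mul1mx.
Qed.

Lemma mxtrace_gmeanmx n (A B : 'M[C]_n) : posdefmx A -> posdefmx B ->
  \tr (gmeanmx A (invmx B) *m B) = uhlmann_fidelity A B.
Proof.
move=> pdA pdB; rewrite /gmeanmx /uhlmann_fidelity; set S := sqrtmx A.
have pdS : posdefmx S := sqrtmx_posdef pdA; have uS := posdefmx_unit pdS.
have pdSBS : posdefmx (S *m B *m S) by rewrite -{1}pdS.1; apply: posdefmx_congr.
have uB := posdefmx_unit pdB.
have -> : invmx S *m invmx B *m invmx S = invmx (S *m B *m S).
  by rewrite !invmxM ?unitmx_mul ?uS ?uB // mulmxA.
rewrite sqrtmx_invmx //; set W := sqrtmx (S *m B *m S).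
have SBS : S *m B *m S = W *m W by rewrite sqrtmxK //; apply: posdefmx_psd.
rewrite -!mulmxA mxtrace_mulC -!mulmxA (mulmxA S) SBS mulKmx //.
by apply/posdefmx_unit/sqrtmx_posdef.
Qed.

Lemma comb_mulmx n (G : 'M[C]_n) a b : G \in unitmx ->
  a *: 1%:M + b *: G = (a *: invmx G + b *: 1%:M) *m G.
Proof. by move=> uG; rewrite mulmxDl -!scalemxAl mulVmx // mul1mx. Qed.

Lemma comb_mulmxr n (G : 'M[C]_n) a b : G \in unitmx ->
  a *: 1%:M + b *: G = G *m (a *: invmx G + b *: 1%:M).
Proof. by move=> uG; rewrite mulmxDr -!scalemxAr mulmxV // mulmx1. Qed.

Lemma comb_congr n (G A : 'M[C]_n) a b : G \in unitmx ->
  (a *: 1%:M + b *: G) *m A *m (a *: 1%:M + b *: G)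
  = (a *: invmx G + b *: 1%:M) *m (G *m A *m G) *m (a *: invmx G + b *: 1%:M).
Proof. by move=> uG; rewrite {1}(comb_mulmx _ _ uG) (comb_mulmxr _ _ uG) !mulmxA. Qed.

Lemma sandwich_invmxK n (M A : 'M[C]_n) :
  M \in unitmx -> A \in unitmx -> M *m invmx (M *m invmx A *m M) *m M = A.
Proof.
move=> uM uA; rewrite !invmxM ?unitmx_mul ?unitmx_inv ?uM ?uA // invmxK.
by rewrite !mulmxA mulmxV // mul1mx mulmxKV.
Qed.

Lemma gen_fidelity_sandwich n (R M L : 'M[C]_n) :
  posdefmx R -> psdmx M -> psdmx L ->
  gen_fidelity R (M *m R *m M) (L *m R *m L) = \tr (M *m L *m R).
Proof.
move=> pdR psdM psdL; have psdR := posdefmx_psd pdR.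
rewrite /gen_fidelity /= !sqrtmx_sandwich //; set S := sqrtmx R.
have uS : S \in unitmx by apply/posdefmx_unit/sqrtmx_posdef.
rewrite -[R in invmx R](sqrtmxK psdR) -/S invmxM // !mulmxA mulmxK // mulmxKV //.
by rewrite mxtrace_mulC [RHS]mxtrace_mulC !mulmxA sqrtmxK.
Qed.

End PositiveMatrices.

Theorem mainTheorem5 (C : numClosedFieldType) (d : nat) (P Q : 'M[C]_d) (t : C) :
  posdefmx P -> posdefmx Q -> 0 <= t <= 1 ->
  gen_fidelity (invmx (bw_geodesic (invmx P) (invmx Q) t)) P Q
  = uhlmann_fidelity P Q.
Proof.
move=> pdP pdQ /andP[t_ge0 t_le1].
have pdQV := posdefmx_inv pdQ.
rewrite /bw_geodesic invmxK; set G := gmeanmx P (invmx Q).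
have pdG : posdefmx G := gmeanmx_posdef pdP pdQV.
have uG := posdefmx_unit pdG.
have geodesicE := comb_congr (invmx P) (1 - t) t uG.
rewrite gmeanmx_riccati // in geodesicE; have ME := comb_mulmx (1 - t) t uG.
set M := (1 - t) *: 1%:M + t *: G in geodesicE ME *.
set L := (1 - t) *: invmx G + t *: 1%:M in geodesicE ME.
have t_pos : (0 < 1 - t) || (0 < t).
  have [->|t_neq0] := eqVneq t 0; first by rewrite subr0 ltr01.
  by rewrite orbC lt_def t_neq0 t_ge0.
have subt_ge0 : 0 <= 1 - t by rewrite subr_ge0.
have pdM : posdefmx M := posdefmx_comb pdG subt_ge0 t_ge0 t_pos.
have pdL : posdefmx L.
  by rewrite /L addrC; apply: posdefmx_comb (posdefmx_inv pdG) t_ge0 subt_ge0 _; rewrite orbC.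
set R := invmx (M *m invmx P *m M).
have pdR : posdefmx R.
  rewrite /R -{1}pdM.1; apply/posdefmx_inv/posdefmx_congr/posdefmx_unit/pdM.
  exact: posdefmx_inv.
have PE : M *m R *m M = P by apply: sandwich_invmxK; rewrite ?posdefmx_unit.
have QE : L *m R *m L = Q by rewrite /R geodesicE sandwich_invmxK ?posdefmx_unit.
have := gen_fidelity_sandwich pdR (posdefmx_psd pdM) (posdefmx_psd pdL).
rewrite PE QE => ->; rewrite -(mxtrace_gmeanmx pdP pdQ) -/G -QE ME.
by rewrite !mulmxA [RHS]mxtrace_mulC !mulmxA.
Qed.
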